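(* Let $A$ be a $3\times3$ matrix with pairwise distinct eigenvalues $\lambda_1,\lambda_2,\lambda_3$ such that $\lambda_1+\lambda_2\neq 0$, and let $h>0$. Define $$\phi=\frac{(\lambda_3^2-\lambda_2^2)(\lambda_2^2e^{\lambda_1h}-\lambda_1^2e^{\lambda_2h})-(\lambda_2^2-\lambda_1^2)(\lambda_3^2e^{\lambda_2h}-\lambda_2^2e^{\lambda_3h})}{\lambda_1\lambda_2(\lambda_2-\lambda_1)(\lambda_3^2-\lambda_2^2)-\lambda_2\lambda_3(\lambda_3-\lambda_2)(\lambda_2^2-\lambda_1^2)},$$ $$\psi=\frac{\lambda_2^2e^{\lambda_1h}-\lambda_1^2e^{\lambda_2h}-\lambda_1\lambda_2(\lambda_2-\lambda_1)\phi}{\lambda_2^2-\lambda_1^2},\qquad \theta=\frac{e^{\lambda_3h}-\psi-\lambda_3\phi}{\lambda_3^2\phi^2}.$$ Then (whenever these expressions are defined) the explicit difference scheme $$\frac{\mathbf{x}_{k+1}-\psi\mathbf{x}_k}{\phi}=A\mathbf{x}_k+\theta\phi A^2\mathbf{x}_k$$ is exact for the system $\mathbf{x}'=A\mathbf{x}$.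
   Context: A one-step difference scheme with step size $h>0$ for $\mathbf{x}'=M\mathbf{x}$ is called exact if for every initial vector $\mathbf{x}_0$ the sequence $(\mathbf{x}_k)$ it generates satisfies $\mathbf{x}_k=\mathbf{x}(kh)$ for all $k\ge 0$, where $\mathbf{x}(t)$ solves $\mathbf{x}'=M\mathbf{x}$, $\mathbf{x}(0)=\mathbf{x}_0$. *)

From HB Require Import structures.
From mathcomp Require Import all_boot all_order all_algebra.
From mathcomp Require Import all_classical all_reals all_analysis.
From mathcomp Require Import complex.
Set Implicit Arguments. Unset Strict Implicit. Unset Printing Implicit Defensive.
Import Order.TTheory GRing.Theory Num.Theory.
Import numFieldNormedType.Exports.
Local Open Scope ring_scope.
Local Open Scope complex_scope.

Definition cexp (R : realType) (z : R[i]) : R[i] :=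
  (expR (complex.Re z) * cos (complex.Im z)) +i* (expR (complex.Re z) * sin (complex.Im z)).

Definition has_cderiv (R : realType) (f : R -> R[i]) (t : R) (d : R[i]) : Prop :=
  is_derive t (1:R) (fun s => complex.Re (f s)) (complex.Re d) /\
  is_derive t (1:R) (fun s => complex.Im (f s)) (complex.Im d).

Definition solves_ode (R : realType) (n : nat) (M : 'M[R[i]]_n) (x : R -> 'cV[R[i]]_n) : Prop :=
  forall (t : R) (i : 'I_n), has_cderiv (fun s => x s i ord0) t ((M *m x t) i ord0).

Definition exact_scheme (R : realType) (n : nat) (M : 'M[R[i]]_n)
  (step : 'cV[R[i]]_n -> 'cV[R[i]]_n) (h : R) : Prop :=
  forall (x0 : 'cV[R[i]]_n) (x : R -> 'cV[R[i]]_n),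
    solves_ode M x -> x 0 = x0 ->
    forall k : nat, iter k step x0 = x (k%:R * h).

From HB Require Import structures.
From mathcomp Require Import all_boot all_order all_algebra.
From mathcomp Require Import all_classical all_reals all_analysis.
From mathcomp Require Import complex.
From mathcomp Require Import ring.
Set Implicit Arguments. Unset Strict Implicit. Unset Printing Implicit Defensive.
Import Order.TTheory GRing.Theory Num.Theory.
Local Open Scope ring_scope.
Local Open Scope complex_scope.

(* The scheme is x_{k+1} = p(A) x_k with p(z) = psi + phi z + theta phi^2 z^2, and psi, phi,
   theta are exactly the coefficients for which p(l_j) = e^{l_j h}, j = 1, 2, 3.  As the
   eigenvalues are distinct, char_poly A = (X - l_1)(X - l_2)(X - l_3), so by Cayley-Hamilton
   the Lagrange polynomials L_j of (l_1, l_2, l_3) satisfy L_j(A) q(A) = q(l_j) L_j(A) for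
   every polynomial q, while sum_j L_j(A) = 1.  Along a solution x, the scalar functions
   L_j(A) x(t) solve y' = l_j y, hence L_j(A) x(t + h) = e^{l_j h} L_j(A) x(t) = L_j(A) p(A) x(t),
   and summing over j gives x(t + h) = p(A) x(t). *)

Section ComplexDerivative.
Variable R : realType.
Implicit Types (f g : R -> R[i]) (t h : R) (x y z c df dg : R[i]).

Lemma Re_add x y : complex.Re (x + y) = complex.Re x + complex.Re y.
Proof. by case: x; case: y. Qed.

Lemma Im_add x y : complex.Im (x + y) = complex.Im x + complex.Im y.
Proof. by case: x; case: y. Qed.

Lemma Re_mul x y :
  complex.Re (x * y) = complex.Re x * complex.Re y - complex.Im x * complex.Im y.
Proof. by case: x; case: y. Qed.

Lemma Im_mul x y :
  complex.Im (x * y) = complex.Re x * complex.Im y + complex.Im x * complex.Re y.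
Proof. by case: x; case: y => ? ? ? ? /=; rewrite addrC. Qed.

Lemma has_cderiv_cst c t : has_cderiv (fun=> c) t 0.
Proof. by split; exact: is_derive_cst. Qed.

Lemma has_cderivD f g t df dg : has_cderiv f t df -> has_cderiv g t dg ->
  has_cderiv (fun s => f s + g s) t (df + dg).
Proof.
move=> [fr fi] [gr gi]; split.
- by under eq_fun do rewrite Re_add; rewrite Re_add; exact: is_deriveD.
- by under eq_fun do rewrite Im_add; rewrite Im_add; exact: is_deriveD.
Qed.

Lemma has_cderivM f g t df dg : has_cderiv f t df -> has_cderiv g t dg ->
  has_cderiv (fun s => f s * g s) t (df * g t + f t * dg).
Proof.
move=> [fr fi] [gr gi]; split.
- under eq_fun do rewrite Re_mul; apply: is_derive_eq.
  by rewrite Re_add !Re_mul /GRing.scale /=; ring.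
- under eq_fun do rewrite Im_mul; apply: is_derive_eq.
  by rewrite Im_add !Im_mul /GRing.scale /=; ring.
Qed.

Lemma has_cderivMl c f t df : has_cderiv f t df ->
  has_cderiv (fun s => c * f s) t (c * df).
Proof. by move=> fd; have := has_cderivM (has_cderiv_cst c t) fd; rewrite mul0r add0r. Qed.

Lemma has_cderiv_sum (I : Type) (r : seq I) (F : I -> R -> R[i]) (dF : I -> R[i]) t :
  (forall k, has_cderiv (F k) t (dF k)) ->
  has_cderiv (fun s => \sum_(k <- r) F k s) t (\sum_(k <- r) dF k).
Proof.
move=> dFk; elim: r => [|k r IHr].
- by under eq_fun do rewrite big_nil; rewrite big_nil; exact: has_cderiv_cst.
- by under eq_fun do rewrite big_cons; rewrite big_cons; exact: has_cderivD.
Qed.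

Lemma has_cderiv_cexp z t :
  has_cderiv (fun s => cexp (z * s%:C)) t (z * cexp (z * t%:C)).
Proof.
case: z => a b.
have lin (k : R) : is_derive t 1 (fun s : R => k * s) k.
  by apply: is_derive_eq; rewrite /GRing.scale /= mulr1.
have dexp : is_derive t 1 (fun s => expR (a * s)) (expR (a * t) * a).
  exact: is_derive1_comp (is_derive_expR _) (lin a).
have dcos : is_derive t 1 (fun s => cos (b * s)) (- sin (b * t) * b).
  exact: is_derive1_comp (is_derive_cos _) (lin b).
have dsin : is_derive t 1 (fun s => sin (b * s)) (cos (b * t) * b).
  exact: is_derive1_comp (is_derive_sin _) (lin b).
rewrite /cexp /= !mulr0 subr0 add0r; split => /=.
- under eq_fun do rewrite subr0 add0r.
  by apply: is_derive_eq (is_deriveM dexp dcos) _; rewrite /GRing.scale /=; ring.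
- under eq_fun do rewrite subr0 add0r.
  by apply: is_derive_eq (is_deriveM dexp dsin) _; rewrite /GRing.scale /=; ring.
Qed.

Lemma has_cderiv_0_is_cst f : (forall t, has_cderiv f t 0) -> forall t h, f t = f h.
Proof.
move=> f0 t h.
have Re_cst := is_derive_0_is_cst t h (fun s => (f0 s).1).
have Im_cst := is_derive_0_is_cst t h (fun s => (f0 s).2).
by move: Re_cst Im_cst; case: (f t); case: (f h) => ? ? ? ? /= -> ->.
Qed.

Lemma cexpD x y : cexp (x + y) = cexp x * cexp y.
Proof.
case: x => a b; case: y => c d; rewrite /cexp /= expRD cosD sinD.
by congr (_ +i* _); ring.
Qed.

Lemma cexp0 : cexp 0 = 1 :> R[i].
Proof. by rewrite /cexp /= expR0 cos0 sin0 mulr1 mulr0. Qed.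

Lemma scalar_ode_shift z f : (forall t, has_cderiv f t (z * f t)) ->
  forall t h, f (t + h) = cexp (z * h%:C) * f t.
Proof.
move=> f' t h.
pose g s := cexp (- z * s%:C) * f s.
have g_cst : forall s u, g s = g u.
  apply: has_cderiv_0_is_cst => s.
  suff -> : 0 = - z * cexp (- z * s%:C) * f s + cexp (- z * s%:C) * (z * f s).
    exact: has_cderivM (has_cderiv_cexp _ _) (f' s).
  by ring.
have cexpK (w : R[i]) : cexp w * cexp (- w) = 1 by rewrite -cexpD subrr cexp0.
rewrite -[f (t + h)]mul1r -(cexpK (z * (t + h)%:C)) -mulrA -mulNr.
rewrite -/(g (t + h)) (g_cst (t + h) t) /g mulrA -cexpD.
by congr (cexp _ * _); rewrite rmorphD /=; ring.
Qed.
End ComplexDerivative.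

Section LinearODE.
Variables (R : realType) (n : nat) (M : 'M[R[i]]_n) (x : R -> 'cV[R[i]]_n).
Hypothesis x_ode : solves_ode M x.

Lemma has_cderiv_mulmx m (Q : 'M[R[i]]_(m, n)) (i : 'I_m) t :
  has_cderiv (fun s => (Q *m x s) i ord0) t ((Q *m (M *m x t)) i ord0).
Proof.
under eq_fun do rewrite mxE; rewrite mxE.
by apply: has_cderiv_sum => k; apply: has_cderivMl.
Qed.

Lemma solves_ode_left_eigen m (Q : 'M[R[i]]_(m, n)) z :
  Q *m M = z *: Q -> forall t h, Q *m x (t + h) = cexp (z * h%:C) *: (Q *m x t).
Proof.
move=> QM t h; apply/matrixP => i j; rewrite (ord1 j) [RHS]mxE.
apply: (scalar_ode_shift (f := fun s => (Q *m x s) i ord0)) => s.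
by have := has_cderiv_mulmx Q i s; rewrite mulmxA QM -scalemxAl mxE.
Qed.
End LinearODE.

Section LagrangeBasis.
Variable F : fieldType.
Implicit Types (s : seq F) (z w : F).

Definition lagrange_basis s z : {poly F} :=
  let q := \prod_(w <- rem z s) ('X - w%:P) in q.[z]^-1 *: q.

Lemma horner_lagrange_basis s z w : uniq s -> z \in s -> w \in s ->
  (lagrange_basis s z).[w] = (z == w)%:R.
Proof.
move=> s_uniq zs ws; rewrite hornerZ !horner_prod.
have [<-|zw] := eqVneq z w.
  rewrite mulVf // prodf_seq_neq0; apply/allP => y.
  by rewrite mem_rem_uniq // hornerXsubC subr_eq0 eq_sym => /andP[].
have w_rem : w \in rem z s by rewrite mem_rem_uniq // inE eq_sym zw.
by rewrite [X in _ * X](big_rem w) //= hornerXsubC subrr mul0r mulr0.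
Qed.

Lemma size_lagrange_basis s z : z \in s -> (size (lagrange_basis s z) <= size s)%N.
Proof.
move=> zs; apply: leq_trans (size_scale_leq _ _) _.
by rewrite size_prod_XsubC size_rem //; case: s zs.
Qed.

Lemma sum_lagrange_basis s : uniq s -> s != [::] ->
  \sum_(z <- s) lagrange_basis s z = 1.
Proof.
move=> s_uniq s_neq0; set L := \sum_(z <- s) _.
have L_roots : all (root (L - 1)) s.
  apply/allP => w ws; rewrite rootE hornerD hornerN hornerC horner_sum.
  rewrite (bigD1_seq w) //= horner_lagrange_basis // eqxx big1_seq ?addr0 ?subrr //.
  by move=> z /andP[zw zs]; rewrite horner_lagrange_basis // (negPf zw).
have L_size : (size (L - 1)%R <= size s)%N.
  rewrite (leq_trans (size_polyD _ _)) // geq_max size_polyN size_polyC oner_neq0.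
  rewrite lt0n size_eq0 s_neq0 andbT.
  apply: leq_trans (size_sum _ _ _) _; apply/bigmax_leqP_seq => z zs _.
  exact: size_lagrange_basis.
apply/eqP; rewrite -subr_eq0; apply: contraTT L_size => L_neq0.
by rewrite -ltnNge; exact: max_poly_roots.
Qed.
End LagrangeBasis.

Section SpectralProjection.
Variables (F : fieldType) (n : nat) (A : 'M[F]_n.+1) (s : seq F).
Hypotheses (s_uniq : uniq s) (s_eigen : all (eigenvalue A) s) (s_size : size s = n.+1).

Lemma char_poly_uniq_eigenvalues : char_poly A = \prod_(z <- s) ('X - z%:P).
Proof.
have s_roots : all (root (char_poly A)) s.
  by apply/allP => z /(allP s_eigen); rewrite eigenvalue_root_char.
apply/eqP; rewrite -eqp_monic ?char_poly_monic ?monic_prod_XsubC // eqp_sym.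
by rewrite -dvdp_size_eqp ?uniq_roots_dvdp ?uniq_rootsE // size_char_poly size_prod_XsubC s_size.
Qed.

Lemma horner_mx_annihilated_factor (p q : {poly F}) z :
  horner_mx A (('X - z%:P) * q) = 0 ->
  horner_mx A q *m horner_mx A p = p.[z] *: horner_mx A q.
Proof.
move=> Xq0; have /factor_theorem [r pE] : root (p - p.[z]%:P) z.
  by rewrite rootE hornerD hornerN hornerC subrr.
rewrite -[in LHS](subrK p.[z]%:P p) pE rmorphD /= horner_mx_C mulmxDr.
rewrite scalar_mxC mul_scalar_mx mulmxE -rmorphM /= mulrCA [q * _]mulrC.
by rewrite rmorphM /= Xq0 mulr0 add0r.
Qed.

Lemma horner_mx_lagrange_basis (p : {poly F}) z : z \in s ->
  horner_mx A (lagrange_basis s z) *m horner_mx A p =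
  p.[z] *: horner_mx A (lagrange_basis s z).
Proof.
move=> zs; apply: horner_mx_annihilated_factor.
rewrite /lagrange_basis -scalerAr.
have -> : ('X - z%:P) * \prod_(w <- rem z s) ('X - w%:P) = char_poly A.
  by rewrite char_poly_uniq_eigenvalues (big_rem z zs).
by rewrite linearZ /= Cayley_Hamilton scaler0.
Qed.

Lemma sum_horner_mx_lagrange_basis :
  \sum_(z <- s) horner_mx A (lagrange_basis s z) = 1%:M.
Proof. by rewrite -rmorph_sum sum_lagrange_basis ?rmorph1 // -size_eq0 s_size. Qed.
End SpectralProjection.

Lemma exact_scheme_horner_mx (R : realType) n (A : 'M[R[i]]_n.+1) (s : seq R[i])
    (p : {poly R[i]}) (h : R) (step : 'cV[R[i]]_n.+1 -> 'cV[R[i]]_n.+1) :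
  uniq s -> all (eigenvalue A) s -> size s = n.+1 ->
  {in s, forall z, p.[z] = cexp (z * h%:C)} ->
  step =1 mulmx (horner_mx A p) ->
  exact_scheme A step h.
Proof.
move=> s_uniq s_eigen s_size p_exp step_p x0 x x_ode <-.
pose Q z := horner_mx A (lagrange_basis s z).
have one_step t : step (x t) = x (t + h).
  rewrite step_p -[x (t + h)]mul1mx -[_ *m x t]mul1mx.
  rewrite -(sum_horner_mx_lagrange_basis A s_uniq s_size).
  rewrite !mulmx_suml; apply: eq_big_seq => z zs.
  have QA : Q z *m A = z *: Q z.
    by rewrite -[X in _ *m X](horner_mx_X A) horner_mx_lagrange_basis // hornerX.
  rewrite mulmxA horner_mx_lagrange_basis // p_exp // -scalemxAl.
  by rewrite (solves_ode_left_eigen x_ode QA).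
elim=> [|k IHk]; first by rewrite mul0r.
by rewrite iterS IHk one_step -[k.+1]addn1 natrD mulrDl mul1r.
Qed.

Section SchemePolynomial.
Variables (R : comNzRingType) (psi phi theta : R).

Definition scheme_poly : {poly R} := psi%:P + phi *: ('X + (theta * phi) *: 'X^2).

Lemma horner_scheme_poly z : scheme_poly.[z] = psi + phi * (z + theta * phi * z ^+ 2).
Proof. by rewrite hornerD hornerC hornerZ hornerD hornerX hornerZ hornerXn. Qed.

Lemma horner_mx_scheme_poly n (A : 'M[R]_n.+1) (v : 'cV[R]_n.+1) :
  horner_mx A scheme_poly *m v =
  psi *: v + phi *: (A *m v + (theta * phi) *: (A *m (A *m v))).
Proof.
rewrite [in LHS]linearD linearZ linearD linearZ /= horner_mx_C horner_mx_X rmorphXn /=.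
rewrite horner_mx_X !mulmxDl mul_scalar_mx -!scalemxAl expr2.
by rewrite mulmxDl -scalemxAl -mulmxE mulmxA.
Qed.
End SchemePolynomial.

Section SchemeCoefficients.
Variables (F : fieldType) (l1 l2 l3 E1 E2 E3 : F).

(* Eliminating the quadratic term between equations 1, 2 and between equations 2, 3 of the
   system psi + phi l_j + theta phi^2 l_j^2 = E_j gives psi and phi; equation 3 gives theta. *)
Definition scheme_den :=
  l1 * l2 * (l2 - l1) * (l3 ^+ 2 - l2 ^+ 2) - l2 * l3 * (l3 - l2) * (l2 ^+ 2 - l1 ^+ 2).

Definition scheme_phi :=
  ((l3 ^+ 2 - l2 ^+ 2) * (l2 ^+ 2 * E1 - l1 ^+ 2 * E2)
   - (l2 ^+ 2 - l1 ^+ 2) * (l3 ^+ 2 * E2 - l2 ^+ 2 * E3)) / scheme_den.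

Definition scheme_psi :=
  (l2 ^+ 2 * E1 - l1 ^+ 2 * E2 - l1 * l2 * (l2 - l1) * scheme_phi) / (l2 ^+ 2 - l1 ^+ 2).

Definition scheme_theta :=
  (E3 - scheme_psi - l3 * scheme_phi) / (l3 ^+ 2 * scheme_phi ^+ 2).

Lemma scheme_poly_interpolates :
  l1 != l2 -> l1 + l2 != 0 -> scheme_den != 0 -> l3 ^+ 2 * scheme_phi ^+ 2 != 0 ->
  let p := scheme_poly scheme_psi scheme_phi scheme_theta in
  [/\ p.[l1] = E1, p.[l2] = E2 & p.[l3] = E3].
Proof.
move=> l12 l12_sum den_neq0 l3phi_neq0 p.
have [l3_neq0 phi_neq0] : l3 != 0 /\ scheme_phi != 0.
  by move: l3phi_neq0; rewrite mulf_eq0 !expf_eq0 /= negb_or => /andP.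
have sq12_neq0 : l2 ^+ 2 - l1 ^+ 2 != 0.
  rewrite subr_sqr mulf_neq0 //; first by rewrite subr_eq0 eq_sym.
  by rewrite addrC.
have quad_coef : scheme_theta * scheme_phi * scheme_phi =
    (E3 - scheme_psi - l3 * scheme_phi) / l3 ^+ 2.
  by rewrite /scheme_theta; field; rewrite l3_neq0 phi_neq0.
have poly_val z : p.[z] =
    scheme_psi + scheme_phi * z + (E3 - scheme_psi - l3 * scheme_phi) / l3 ^+ 2 * z ^+ 2.
  by rewrite horner_scheme_poly -quad_coef; ring.
rewrite !poly_val; split; last by rewrite divfK ?expf_neq0 //; ring.
- by rewrite /scheme_psi /scheme_phi /scheme_den; field; rewrite l3_neq0 sq12_neq0 den_neq0.
- by rewrite /scheme_psi /scheme_phi /scheme_den; field; rewrite l3_neq0 sq12_neq0 den_neq0.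
Qed.
End SchemeCoefficients.

Theorem mainTheorem12 (R : realType) (A : 'M[R[i]]_3) (l1 l2 l3 : R[i]) (h : R) :
  eigenvalue A l1 -> eigenvalue A l2 -> eigenvalue A l3 ->
  l1 != l2 -> l1 != l3 -> l2 != l3 ->
  l1 + l2 != 0 ->
  0 < h ->
  let E1 := cexp (l1 * h%:C) in
  let E2 := cexp (l2 * h%:C) in
  let E3 := cexp (l3 * h%:C) in
  let den := l1 * l2 * (l2 - l1) * (l3 ^+ 2 - l2 ^+ 2)
             - l2 * l3 * (l3 - l2) * (l2 ^+ 2 - l1 ^+ 2) in
  let phi := ((l3 ^+ 2 - l2 ^+ 2) * (l2 ^+ 2 * E1 - l1 ^+ 2 * E2)
              - (l2 ^+ 2 - l1 ^+ 2) * (l3 ^+ 2 * E2 - l2 ^+ 2 * E3)) / den in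
  let psi := (l2 ^+ 2 * E1 - l1 ^+ 2 * E2 - l1 * l2 * (l2 - l1) * phi)
             / (l2 ^+ 2 - l1 ^+ 2) in
  let theta := (E3 - psi - l3 * phi) / (l3 ^+ 2 * phi ^+ 2) in
  den != 0 ->
  l3 ^+ 2 * phi ^+ 2 != 0 ->
  exact_scheme A
    (fun xk => psi *: xk + phi *: (A *m xk + (theta * phi) *: (A *m (A *m xk)))) h.
Proof.
move=> A_l1 A_l2 A_l3 l12 l13 l23 l12_sum _ E1 E2 E3 den phi psi theta den_neq0 l3phi_neq0.
have [p_l1 p_l2 p_l3] :=
  scheme_poly_interpolates (E1 := E1) (E2 := E2) (E3 := E3) l12 l12_sum den_neq0 l3phi_neq0.
apply: (exact_scheme_horner_mx (s := [:: l1; l2; l3])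
                              (p := scheme_poly psi phi theta)).
- by rewrite /= !inE negb_or l12 l13 l23.
- by rewrite /= A_l1 A_l2 A_l3.
- by [].
- by move=> z; rewrite !inE => /or3P[] /eqP ->.
- by move=> v; rewrite horner_mx_scheme_poly.
Qed.
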